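(* Let $n>p=p_n$ and $r_n=(-\log(1-\frac pn))^{1/2}$. Assume $p/n\to y\in(0,1]$ and that the real sequences $s=s_n$, $t=t_n$ satisfy $s=O(1/r_n)$, $t=O(1/r_n)$ as $n\to\infty$. Then $$\log\frac{\Gamma_p(\frac n2+t)}{\Gamma_p(\frac n2+s)}=p(t-s)(\log n-1-\log2)+r_n^2\Big[(t^2-s^2)-\Big(p-n+\frac12\Big)(t-s)\Big]+o(1)$$ as $n\to\infty$.
   Context: $\Gamma$ is the Gamma function and, for complex $z$ with $\operatorname{Re}(z)>\frac12(p-1)$, the multivariate Gamma function is $\Gamma_p(z)=\pi^{p(p-1)/4}\prod_{i=1}^p\Gamma\big(z-\frac12(i-1)\big)$. *)

From Stdlib Require Import Reals.
From Coquelicot Require Import Coquelicot.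
Open Scope R_scope.

Definition Gamma (x : R) : R :=
  RInt_gen (fun u => Rpower u (x - 1) * exp (- u))
           (at_right 0) (Rbar_locally p_infty).

Fixpoint prod_Gamma (p : nat) (z : R) : R :=
  match p with
  | O => 1
  | S k => prod_Gamma k z * Gamma (z - INR k / 2)
  end.

Definition mGamma (p : nat) (z : R) : R :=
  Rpower PI (INR p * (INR p - 1) / 4) * prod_Gamma p z.

Definition r_seq (p : nat -> nat) (n : nat) : R :=
  sqrt (- ln (1 - INR (p n) / INR n)).

(* Only two properties of Gamma are used: ln Gamma is convex (Hölder's inequality on the
   defining integral) and ln Gamma (z + 1) = ln Gamma z + ln z (integration by parts).
   Convexity squeezes the increments of ln Gamma between values of ln, so the error
   E(x) = ln Gamma (x + t) - ln Gamma x - t ln x - (t^2 - t) / (2x) tends to 0 as x -> oo;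
   the functional equation shows E(x) - E(x + 1) = O(|t| / x^3), and summing gives
   E(x) = O(|t| / x^2) uniformly for bounded t.  Comparing each factor
   Gamma (n/2 + t - i/2) of Gamma_p with the increments of an explicit discrete primitive,
   the errors telescope to O((|t| + |s|) / (n - p)) = O(1 / (r_n (n - p))), and
   r_n (n - p) -> oo because p/n -> y > 0. *)

From Stdlib Require Import Reals Lra Lia Classical_Prop.
From Coquelicot Require Import Coquelicot.
Open Scope R_scope.

Lemma exp_monotone x y : x <= y -> exp x <= exp y.
Proof. intros [H|H]; [left; apply exp_increasing; exact H|subst; lra]. Qed.

Lemma ln_le_sub1 x : 0 < x -> ln x <= x - 1.
Proof. intros Hx. generalize (exp_ineq1_le (ln x)). rewrite exp_ln; lra. Qed.

Lemma le_of_forall_eps x y : (forall eps, 0 < eps -> x <= y + eps) -> x <= y.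
Proof.
  intros H. apply Rnot_lt_le. intro Hlt. specialize (H ((x - y) / 2) ltac:(lra)). lra.
Qed.

Definition gamma_integrand (z u : R) : R := Rpower u (z - 1) * exp (- u).

Lemma gamma_integrand_pos z u : 0 < u -> 0 < gamma_integrand z u.
Proof. intros; apply Rmult_lt_0_compat; apply exp_pos. Qed.

Lemma gamma_integrand_exp z u : 0 < u -> gamma_integrand z u = exp ((z - 1) * ln u - u).
Proof. intros; unfold gamma_integrand, Rpower. rewrite <- exp_plus. f_equal; ring. Qed.

Lemma continuous_gamma_integrand z u : 0 < u -> continuous (gamma_integrand z) u.
Proof.
  intros Hu. apply (ex_derive_continuous (V:=R_NormedModule)).
  unfold gamma_integrand, Rpower. auto_derive. exact Hu.
Qed.

Lemma ex_RInt_gamma_integrand z a b : 0 < a -> 0 < b -> ex_RInt (gamma_integrand z) a b.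
Proof.
  intros Ha Hb. apply (ex_RInt_continuous (V:=R_CompleteNormedModule)). intros w Hw.
  apply continuous_gamma_integrand. assert (0 < Rmin a b) by (apply Rmin_glb_lt; auto). lra.
Qed.

Lemma RInt_gamma_integrand_pos z a b : 0 < a < b -> 0 < RInt (gamma_integrand z) a b.
Proof.
  intros [Ha Hab].
  replace 0 with (RInt (fun _ => 0) a b) at 1
    by (rewrite (RInt_const (V:=R_CompleteNormedModule)); apply Rmult_0_r).
  apply RInt_lt; auto.
  - intros; apply continuous_gamma_integrand; lra.
  - intros; apply continuous_const.
  - intros; apply gamma_integrand_pos; lra.
Qed.

Lemma RInt_gamma_integrand_monotone z a b a' b' : 0 < a' -> a' <= a -> a <= b -> b <= b' ->
  RInt (gamma_integrand z) a b <= RInt (gamma_integrand z) a' b'.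
Proof.
  intros H1 H2 H3 H4.
  rewrite <- (RInt_Chasles (V:=R_CompleteNormedModule) _ a' a b')
    by (apply ex_RInt_gamma_integrand; lra).
  rewrite <- (RInt_Chasles (V:=R_CompleteNormedModule) _ a b b')
    by (apply ex_RInt_gamma_integrand; lra).
  assert (0 <= RInt (gamma_integrand z) a' a /\ 0 <= RInt (gamma_integrand z) b b')
    as [? ?].
  { split; apply RInt_ge_0; try lra; try (apply ex_RInt_gamma_integrand; lra);
      intros; left; apply gamma_integrand_pos; lra. }
  unfold plus; simpl. lra.
Qed.

(* Near 0 the integrand is at most [u^(z-1)], whose primitive is [u^z / z]. *)
Lemma RInt_gamma_integrand_head z a : 0 < z -> 0 < a <= 1 ->
  RInt (gamma_integrand z) a 1 <= 1 / z.
Proof.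
  intros Hz [Ha Ha1].
  assert (HI : is_RInt (fun u => exp ((z - 1) * ln u)) a 1
                 (minus (exp (z * ln 1) / z) (exp (z * ln a) / z))).
  { apply (is_RInt_derive (V:=R_CompleteNormedModule) (fun u => exp (z * ln u) / z));
      intros x Hx; rewrite Rmin_left, Rmax_right in Hx by lra.
    - auto_derive; [lra|].
      replace ((z - 1) * ln x) with (z * ln x + - ln x) by ring.
      rewrite exp_plus, exp_Ropp, exp_ln by lra. field; lra.
    - apply (ex_derive_continuous (V:=R_NormedModule)). auto_derive. lra. }
  apply Rle_trans with (RInt (fun u => exp ((z - 1) * ln u)) a 1).
  - apply RInt_le; [lra | apply ex_RInt_gamma_integrand; lra | eexists; exact HI |].
    intros x Hx. unfold gamma_integrand, Rpower.
    rewrite <- (Rmult_1_r (exp ((z - 1) * ln x))) at 2.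
    apply Rmult_le_compat_l; [left; apply exp_pos|].
    rewrite <- exp_0. apply exp_monotone; lra.
  - rewrite (is_RInt_unique _ _ _ _ HI). unfold minus, plus, opp; simpl.
    rewrite ln_1, Rmult_0_r, exp_0.
    assert (0 < exp (z * ln a) / z) by (apply Rdiv_lt_0_compat; [apply exp_pos | lra]).
    lra.
Qed.

Definition gamma_tail_const (z : R) : R :=
  exp (Rmax (z - 1) 0 * ln (2 * Rmax (z - 1) 0 + 2)).

(* With [w = max (z-1) 0] and [c = 2w + 2]: [ln u <= ln c + u / c], and [w u / c <= u / 2]. *)
Lemma gamma_integrand_tail_le z u : 1 <= u ->
  gamma_integrand z u <= gamma_tail_const z * exp (- u / 2).
Proof.
  intros Hu. unfold gamma_tail_const.
  set (w := Rmax (z - 1) 0). set (c := 2 * w + 2).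
  assert (Hw0 : 0 <= w) by apply Rmax_r.
  assert (Hw1 : z - 1 <= w) by apply Rmax_l.
  assert (Hlu : 0 <= ln u) by (rewrite <- ln_1; apply ln_le; lra).
  assert (Hl : ln u <= ln c + u / c).
  { replace u with (c * (u / c)) at 1 by (unfold c; field; lra).
    assert (0 < u / c) by (unfold c; apply Rdiv_lt_0_compat; lra).
    rewrite ln_mult by (try exact H; unfold c; lra). generalize (ln_le_sub1 (u / c) H). lra. }
  assert (Hwu : w * (u / c) <= u / 2).
  { apply Rmult_le_reg_r with c; [unfold c; lra|].
    replace (w * (u / c) * c) with (w * u) by (unfold c; field; lra).
    replace (u / 2 * c) with (u * w + u) by (unfold c; field).
    lra. }
  unfold gamma_integrand, Rpower. rewrite <- !exp_plus. apply exp_monotone.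
  assert ((z - 1) * ln u <= w * ln u) by (apply Rmult_le_compat_r; lra).
  assert (w * ln u <= w * (ln c + u / c)) by (apply Rmult_le_compat_l; lra).
  lra.
Qed.

Lemma RInt_gamma_integrand_tail z b : 1 <= b ->
  RInt (gamma_integrand z) 1 b <= 2 * gamma_tail_const z.
Proof.
  intros Hb. set (K := gamma_tail_const z).
  assert (HK : 0 < K) by apply exp_pos.
  assert (HI : is_RInt (fun u => K * exp (- u / 2)) 1 b
                 (minus (- 2 * K * exp (- b / 2)) (- 2 * K * exp (- 1 / 2)))).
  { apply (is_RInt_derive (V:=R_CompleteNormedModule) (fun u => - 2 * K * exp (- u / 2)));
      intros x Hx.
    - auto_derive; auto. lra.
    - apply (ex_derive_continuous (V:=R_NormedModule)). auto_derive. auto. }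
  apply Rle_trans with (RInt (fun u => K * exp (- u / 2)) 1 b).
  - apply RInt_le; [lra | apply ex_RInt_gamma_integrand; lra | eexists; exact HI |].
    intros x Hx. apply gamma_integrand_tail_le. lra.
  - rewrite (is_RInt_unique _ _ _ _ HI). unfold minus, plus, opp; simpl.
    assert (exp (- 1 / 2) <= 1) by (rewrite <- exp_0; apply exp_monotone; lra).
    assert (0 < exp (- b / 2)) by apply exp_pos. nra.
Qed.

Lemma RInt_gamma_integrand_bounded z : 0 < z ->
  exists M, forall a b, 0 < a -> a <= b -> RInt (gamma_integrand z) a b <= M.
Proof.
  intros Hz. exists (1 / z + 2 * gamma_tail_const z). intros a b Ha Hab.
  pose proof (Rmin_l a 1). pose proof (Rmin_r a 1).
  pose proof (Rmax_l b 1). pose proof (Rmax_r b 1).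
  assert (0 < Rmin a 1) by (apply Rmin_glb_lt; lra).
  apply Rle_trans with (RInt (gamma_integrand z) (Rmin a 1) (Rmax b 1)).
  { apply RInt_gamma_integrand_monotone; lra. }
  rewrite <- (RInt_Chasles (V:=R_CompleteNormedModule) _ (Rmin a 1) 1 (Rmax b 1))
    by (apply ex_RInt_gamma_integrand; lra).
  pose proof (RInt_gamma_integrand_head z (Rmin a 1) Hz ltac:(lra)).
  pose proof (RInt_gamma_integrand_tail z (Rmax b 1) ltac:(lra)).
  unfold plus; simpl. lra.
Qed.

Lemma Gamma_spec z : 0 < z ->
  (forall a b, 0 < a -> a <= b -> RInt (gamma_integrand z) a b <= Gamma z) /\
  (forall eps, 0 < eps -> exists a0 b0, 0 < a0 /\ a0 <= b0 /\
     forall a b, 0 < a -> a <= a0 -> b0 <= b -> Gamma z - eps < RInt (gamma_integrand z) a b).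
Proof.
  intros Hz. destruct (RInt_gamma_integrand_bounded z Hz) as [M HM].
  set (E := fun v => exists a b, 0 < a /\ a <= b /\ v = RInt (gamma_integrand z) a b).
  assert (HB : bound E) by (exists M; intros v [a [b [Ha [Hab ->]]]]; apply HM; auto).
  assert (HE : exists v, E v) by (exists (RInt (gamma_integrand z) 1 1), 1, 1; repeat split; lra).
  destruct (completeness E HB HE) as [l [Hub Hlub]].
  assert (Hupper : forall a b, 0 < a -> a <= b -> RInt (gamma_integrand z) a b <= l)
    by (intros a b Ha Hab; apply Hub; exists a, b; auto).
  assert (Hlower : forall eps, 0 < eps -> exists a0 b0, 0 < a0 /\ a0 <= b0 /\
     forall a b, 0 < a -> a <= a0 -> b0 <= b -> l - eps < RInt (gamma_integrand z) a b).
  { intros eps Heps.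
    assert (exists v, E v /\ l - eps < v) as [v [[a0 [b0 [Ha0 [Hab0 ->]]]] Hv]].
    { apply NNPP. intro Hn.
      assert (l <= l - eps); [|lra].
      apply Hlub. intros v Hv. apply Rnot_lt_le. intro Hlt. apply Hn. exists v; auto. }
    exists a0, b0. repeat split; auto.
    intros a b Ha Ha' Hb. eapply Rlt_le_trans; [exact Hv|].
    apply RInt_gamma_integrand_monotone; lra. }
  enough (Gamma z = l) as -> by auto.
  unfold Gamma. apply (is_RInt_gen_unique (V:=R_CompleteNormedModule) (gamma_integrand z)).
  intros P [eps HP].
  destruct (Hlower eps (cond_pos eps)) as [a0 [b0 [Ha0 [Hab0 Happ]]]].
  apply Filter_prod with (Q := fun a => 0 < a <= a0) (R := fun b => b0 < b).
  - exists (mkposreal a0 Ha0). intros a Ha Hpos.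
    change (Rabs (a - 0) < a0) in Ha. apply Rabs_def2 in Ha. simpl; lra.
  - exists b0. auto.
  - intros a b [Ha Ha'] Hb. exists (RInt (gamma_integrand z) a b). split.
    + apply (RInt_correct (V:=R_CompleteNormedModule)). apply ex_RInt_gamma_integrand; lra.
    + apply HP. change (Rabs (RInt (gamma_integrand z) a b - l) < eps).
      pose proof (Happ a b ltac:(lra) Ha' ltac:(lra)).
      pose proof (Hupper a b ltac:(lra) ltac:(lra)).
      apply Rabs_def1; lra.
Qed.

Lemma Gamma_pos z : 0 < z -> 0 < Gamma z.
Proof.
  intros Hz. eapply Rlt_le_trans; [apply (RInt_gamma_integrand_pos z 1 2); lra|].
  apply (proj1 (Gamma_spec z Hz)); lra.
Qed.

Lemma Rabs_le_all_eps_eq0 x : (forall eps, 0 < eps -> Rabs x <= eps) -> x = 0.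
Proof.
  intros H. apply Rabs_eq_0, Rle_antisym; [|apply Rabs_pos].
  apply le_of_forall_eps. intros eps Heps. specialize (H eps Heps). lra.
Qed.

Lemma RInt_gamma_integrand_succ z a b : 0 < a -> 0 < b ->
  RInt (gamma_integrand (z + 1)) a b =
  gamma_integrand (z + 1) a - gamma_integrand (z + 1) b + z * RInt (gamma_integrand z) a b.
Proof.
  intros Ha Hb.
  assert (Hm : 0 < Rmin a b) by (apply Rmin_glb_lt; lra).
  assert (HI : is_RInt (fun u => gamma_integrand (z + 1) u - z * gamma_integrand z u) a b
     (minus (- gamma_integrand (z + 1) b) (- gamma_integrand (z + 1) a))).
  { apply (is_RInt_derive (V:=R_CompleteNormedModule) (fun u => - gamma_integrand (z + 1) u));
      intros x Hx.
    - unfold gamma_integrand, Rpower. auto_derive; [lra|].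
      replace (z + 1 - 1) with z by ring.
      replace ((z - 1) * ln x) with (z * ln x + - ln x) by ring.
      rewrite exp_plus, (exp_Ropp (ln x)), exp_ln by lra. field; lra.
    - apply (continuous_minus (V:=R_NormedModule));
        [|apply (continuous_scal_r (V:=R_NormedModule) z (gamma_integrand z))];
        apply continuous_gamma_integrand; lra. }
  assert (HJ : is_RInt (fun u => gamma_integrand (z + 1) u - z * gamma_integrand z u) a b
     (minus (RInt (gamma_integrand (z + 1)) a b) (scal z (RInt (gamma_integrand z) a b)))).
  { apply (is_RInt_minus (V:=R_NormedModule)); [|apply (is_RInt_scal (V:=R_NormedModule))];
      apply (RInt_correct (V:=R_CompleteNormedModule)); apply ex_RInt_gamma_integrand; lra. }
  pose proof (is_RInt_unique _ _ _ _ HI) as EI. rewrite (is_RInt_unique _ _ _ _ HJ) in EI.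
  unfold minus, plus, opp, scal in EI; simpl in EI. unfold mult in EI; simpl in EI. lra.
Qed.

Lemma gamma_boundary_small_at_0 z eps : 0 < z -> 0 < eps ->
  exists a0, 0 < a0 /\ forall a, 0 < a -> a <= a0 -> gamma_integrand (z + 1) a <= eps.
Proof.
  intros Hz Heps. exists (exp (ln eps / z)). split; [apply exp_pos|].
  intros a Ha Ha0. unfold gamma_integrand, Rpower. replace (z + 1 - 1) with z by ring.
  assert (exp (- a) <= 1) by (rewrite <- exp_0; apply exp_monotone; lra).
  assert (exp (z * ln a) <= eps).
  { rewrite <- (exp_ln eps Heps). apply exp_monotone.
    replace (ln eps) with (z * ln (exp (ln eps / z))) by (rewrite ln_exp; field; lra).
    apply Rmult_le_compat_l; [lra|]. apply ln_le; auto. }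
  pose proof (exp_pos (z * ln a)). nra.
Qed.

Lemma gamma_boundary_small_at_infty z eps : 0 < eps ->
  exists b0, 0 < b0 /\ forall b, b0 <= b -> gamma_integrand (z + 1) b <= eps.
Proof.
  intros Heps. set (K := gamma_tail_const (z + 1)).
  assert (HK : 0 < K) by apply exp_pos.
  exists (Rmax 1 (- 2 * ln (eps / K))). split; [pose proof (Rmax_l 1 (- 2 * ln (eps / K))); lra|].
  intros b Hb. pose proof (Rmax_l 1 (- 2 * ln (eps / K))). pose proof (Rmax_r 1 (- 2 * ln (eps / K))).
  eapply Rle_trans; [apply gamma_integrand_tail_le; lra|]. fold K.
  replace eps with (K * exp (ln (eps / K)))
    by (rewrite exp_ln by (apply Rdiv_lt_0_compat; lra); field; lra).
  apply Rmult_le_compat_l; [lra|]. apply exp_monotone. lra.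
Qed.

Lemma Gamma_succ z : 0 < z -> Gamma (z + 1) = z * Gamma z.
Proof.
  intros Hz. apply Rminus_diag_uniq, Rabs_le_all_eps_eq0. intros eps Heps.
  set (e := eps / (z + 2)). assert (He : 0 < e) by (apply Rdiv_lt_0_compat; lra).
  destruct (Gamma_spec z Hz) as [U0 L0].
  destruct (Gamma_spec (z + 1) ltac:(lra)) as [U1 L1].
  destruct (L0 e He) as [a0 [b0 [Ha0 [Hab0 A0]]]].
  destruct (L1 e He) as [a1 [b1 [Ha1 [Hab1 A1]]]].
  destruct (gamma_boundary_small_at_0 z e Hz He) as [a2 [Ha2 Ba]].
  destruct (gamma_boundary_small_at_infty z e He) as [b2 [Hb2 Bb]].
  set (a := Rmin a0 (Rmin a1 a2)). set (b := Rmax b0 (Rmax b1 (Rmax b2 a))).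
  assert (Ha : 0 < a) by (apply Rmin_glb_lt; [|apply Rmin_glb_lt]; lra).
  assert (a <= a0) by apply Rmin_l.
  assert (a <= a1) by (eapply Rle_trans; [apply Rmin_r | apply Rmin_l]).
  assert (a <= a2) by (eapply Rle_trans; [apply Rmin_r | apply Rmin_r]).
  assert (b0 <= b) by apply Rmax_l.
  assert (b1 <= b) by (eapply Rle_trans; [apply Rmax_l | apply Rmax_r]).
  assert (b2 <= b)
    by (eapply Rle_trans; [|apply Rmax_r]; eapply Rle_trans; [apply Rmax_l | apply Rmax_r]).
  assert (a <= b)
    by (eapply Rle_trans; [|apply Rmax_r]; eapply Rle_trans; [apply Rmax_r | apply Rmax_r]).
  pose proof (U0 a b Ha ltac:(lra)). pose proof (A0 a b Ha ltac:(lra) ltac:(lra)).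
  pose proof (U1 a b Ha ltac:(lra)). pose proof (A1 a b Ha ltac:(lra) ltac:(lra)).
  rewrite RInt_gamma_integrand_succ in * by lra.
  pose proof (Ba a Ha ltac:(lra)). pose proof (Bb b ltac:(lra)).
  pose proof (gamma_integrand_pos (z + 1) a Ha). pose proof (gamma_integrand_pos (z + 1) b ltac:(lra)).
  set (I := RInt (gamma_integrand z) a b) in *.
  assert (z * (Gamma z - e) <= z * I <= z * Gamma z) by (split; apply Rmult_le_compat_l; lra).
  replace eps with ((z + 2) * e) by (unfold e; field; lra).
  apply Rabs_le. nra.
Qed.

Lemma exp_convex_comb l x y : 0 <= l <= 1 ->
  exp (l * x + (1 - l) * y) <= l * exp x + (1 - l) * exp y.
Proof.
  intros Hl. set (m := l * x + (1 - l) * y).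
  assert (Hsupport : forall w, exp m * (1 + (w - m)) <= exp w).
  { intros w. replace (exp w) with (exp m * exp (w - m)) by (rewrite <- exp_plus; f_equal; ring).
    apply Rmult_le_compat_l; [left; apply exp_pos | apply exp_ineq1_le]. }
  pose proof (Rmult_le_compat_l l _ _ ltac:(lra) (Hsupport x)).
  pose proof (Rmult_le_compat_l (1 - l) _ _ ltac:(lra) (Hsupport y)).
  assert (l * (exp m * (1 + (x - m))) + (1 - l) * (exp m * (1 + (y - m))) = exp m)
    by (unfold m; ring).
  lra.
Qed.

(* Hölder's inequality for the truncated Gamma integrals, with the pointwise bound
   [f^l g^(1-l) <= l f / A + (1-l) g / B] after normalising by the integrals [A], [B]. *)
Lemma RInt_gamma_integrand_log_convex x y l a b : 0 <= l <= 1 -> 0 < a < b ->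
  RInt (gamma_integrand (l * x + (1 - l) * y)) a b <=
  exp (l * ln (RInt (gamma_integrand x) a b) + (1 - l) * ln (RInt (gamma_integrand y) a b)).
Proof.
  intros Hl Hab.
  set (A := RInt (gamma_integrand x) a b). set (B := RInt (gamma_integrand y) a b).
  set (G := exp (l * ln A + (1 - l) * ln B)).
  assert (HA : 0 < A) by apply RInt_gamma_integrand_pos, Hab.
  assert (HB : 0 < B) by apply RInt_gamma_integrand_pos, Hab.
  assert (HG : 0 < G) by apply exp_pos.
  set (h := fun u => plus (scal (G * l / A) (gamma_integrand x u))
                          (scal (G * (1 - l) / B) (gamma_integrand y u))).
  assert (HI : is_RInt h a b (plus (scal (G * l / A) A) (scal (G * (1 - l) / B) B))).
  { apply (is_RInt_plus (V:=R_NormedModule)); apply (is_RInt_scal (V:=R_NormedModule));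
      apply (RInt_correct (V:=R_CompleteNormedModule)); apply ex_RInt_gamma_integrand; lra. }
  apply Rle_trans with (RInt h a b).
  - apply RInt_le; [lra | apply ex_RInt_gamma_integrand; lra | eexists; exact HI |].
    intros u Hu. unfold h, plus, scal; simpl; unfold mult; simpl.
    rewrite !gamma_integrand_exp by lra.
    set (X := (x - 1) * ln u - u). set (Y := (y - 1) * ln u - u).
    replace ((l * x + (1 - l) * y - 1) * ln u - u) with
      ((l * ln A + (1 - l) * ln B) + (l * (X - ln A) + (1 - l) * (Y - ln B)))
      by (unfold X, Y; ring).
    rewrite exp_plus. fold G.
    eapply Rle_trans; [apply Rmult_le_compat_l; [lra | apply exp_convex_comb, Hl]|].
    unfold Rminus. rewrite !exp_plus, !exp_Ropp, !exp_ln by lra. right; field; lra.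
  - rewrite (is_RInt_unique _ _ _ _ HI). unfold plus, scal; simpl; unfold mult; simpl.
    right; field; lra.
Qed.

Lemma ln_Gamma_convex x y l : 0 < x -> 0 < y -> 0 <= l <= 1 ->
  ln (Gamma (l * x + (1 - l) * y)) <= l * ln (Gamma x) + (1 - l) * ln (Gamma y).
Proof.
  intros Hx Hy Hl.
  assert (Hw : 0 < l * x + (1 - l) * y).
  { destruct (Req_dec l 0) as [->|]; [lra|].
    assert (0 < l * x) by (apply Rmult_lt_0_compat; lra).
    assert (0 <= (1 - l) * y) by (apply Rmult_le_pos; lra). lra. }
  rewrite <- (ln_exp (l * ln (Gamma x) + (1 - l) * ln (Gamma y))).
  apply ln_le; [apply Gamma_pos, Hw|].
  apply le_of_forall_eps. intros eps Heps.
  destruct (proj2 (Gamma_spec _ Hw) eps Heps) as [a [b0 [Ha [Hab H]]]].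
  set (b := b0 + 1).
  specialize (H a b Ha (Rle_refl _) ltac:(unfold b; lra)).
  pose proof (RInt_gamma_integrand_log_convex x y l a b Hl ltac:(unfold b; lra)).
  assert (exp (l * ln (RInt (gamma_integrand x) a b) + (1 - l) * ln (RInt (gamma_integrand y) a b))
          <= exp (l * ln (Gamma x) + (1 - l) * ln (Gamma y))).
  { apply exp_monotone, Rplus_le_compat; apply Rmult_le_compat_l; try lra;
      (apply ln_le; [apply RInt_gamma_integrand_pos; unfold b; lra|]);
      apply Gamma_spec; unfold b; lra. }
  lra.
Qed.

Lemma ln_sub_le_div a b : 0 < a -> a <= b -> ln b - ln a <= (b - a) / a.
Proof.
  intros Ha Hab. assert (0 < b / a) by (apply Rdiv_lt_0_compat; lra).
  rewrite <- ln_div by lra. pose proof (ln_le_sub1 _ H).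
  replace ((b - a) / a) with (b / a - 1) by (field; lra). lra.
Qed.

Lemma ln_sub_nonneg a b : 0 < a -> a <= b -> 0 <= ln b - ln a.
Proof. intros. pose proof (ln_le a b H H0). lra. Qed.

Lemma ln_taylor2 u : -1/2 <= u <= 1 -> Rabs (ln (1 + u) - u + u ^ 2 / 2) <= 2 * Rabs u ^ 3.
Proof.
  intros Hu.
  set (h := fun v => ln (1 + v) - v + v ^ 2 / 2).
  assert (Hd : forall c, Rmin 0 u <= c <= Rmax 0 u -> derivable_pt_lim h c (c ^ 2 / (1 + c))).
  { intros c Hc. apply is_derive_Reals. unfold h.
    assert (-1/2 <= c) by (destruct (Rle_dec 0 u);
      [rewrite Rmin_left in Hc | rewrite Rmin_right in Hc]; lra).
    auto_derive; [lra|]. field. lra. }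
  destruct (MVT_abs h _ 0 u Hd) as [c [Hc Hrange]].
  assert (Hc' : -1/2 <= c /\ Rabs c <= Rabs u).
  { destruct (Rle_dec 0 u).
    - rewrite Rmin_left, Rmax_right in Hrange by lra. rewrite !Rabs_right by lra. lra.
    - rewrite Rmin_right, Rmax_left in Hrange by lra. rewrite !Rabs_left1 by lra. lra. }
  unfold h in Hc. rewrite Rplus_0_r, ln_1 in Hc.
  replace (0 - 0 + 0 ^ 2 / 2) with 0 in Hc by (simpl; field).
  rewrite !Rminus_0_r in Hc. rewrite Hc.
  assert (Hq : Rabs (c ^ 2 / (1 + c)) <= 2 * Rabs u ^ 2).
  { rewrite Rabs_div, (Rabs_right (1 + c)), <- RPow_abs by lra.
    apply Rle_trans with (Rabs c ^ 2 / (1/2)).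
    - apply Rmult_le_compat_l; [apply pow_le, Rabs_pos | apply Rinv_le_contravar; lra].
    - assert (Rabs c ^ 2 <= Rabs u ^ 2) by (apply pow_incr; split; [apply Rabs_pos | lra]).
      lra. }
  pose proof (Rabs_pos u).
  replace (2 * Rabs u ^ 3) with (2 * Rabs u ^ 2 * Rabs u) by ring.
  apply Rmult_le_compat_r; auto.
Qed.

Lemma ln_shift_second_order y t B : 1 <= y -> Rabs t <= B -> Rabs t <= y / 2 ->
  Rabs (t * (ln (y + 1) - ln y) - (ln (y + t) - ln y) - (t ^ 2 - t) / (2 * y ^ 2))
   <= 2 * (1 + B ^ 2) * Rabs t / y ^ 3.
Proof.
  intros Hy HtB Hty.
  assert (Hty' : Rabs (t / y) <= 1 / 2).
  { rewrite Rabs_div, (Rabs_right y) by lra.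
    apply Rmult_le_reg_r with y; [lra|]. field_simplify; lra. }
  apply Rabs_le_between in Hty'.
  assert (Hyt : 0 < y + t) by (apply Rabs_le_between in Hty; lra).
  rewrite <- !ln_div by lra.
  replace ((y + 1) / y) with (1 + 1 / y) by (field; lra).
  replace ((y + t) / y) with (1 + t / y) by (field; lra).
  assert (Hiy : 0 < 1 / y <= 1).
  { split; [apply Rdiv_lt_0_compat; lra|]. apply Rmult_le_reg_r with y; [lra|]. field_simplify; lra. }
  pose proof (ln_taylor2 (1 / y) ltac:(lra)) as H1.
  pose proof (ln_taylor2 (t / y) ltac:(lra)) as H2.
  rewrite (Rabs_right (1 / y)) in H1 by lra.
  rewrite Rabs_div, (Rabs_right y) in H2 by lra.
  replace (t * ln (1 + 1 / y) - ln (1 + t / y) - (t ^ 2 - t) / (2 * y ^ 2)) with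
    (t * (ln (1 + 1 / y) - 1 / y + (1 / y) ^ 2 / 2) - (ln (1 + t / y) - t / y + (t / y) ^ 2 / 2))
    by (field; lra).
  unfold Rminus at 1. eapply Rle_trans; [apply Rabs_triang|]. rewrite Rabs_Ropp, Rabs_mult.
  pose proof (Rabs_pos t).
  assert (Rabs t * Rabs (ln (1 + 1 / y) - 1 / y + (1 / y) ^ 2 / 2) <= 2 * Rabs t / y ^ 3).
  { replace (2 * Rabs t / y ^ 3) with (Rabs t * (2 * (1 / y) ^ 3)) by (field; lra).
    apply Rmult_le_compat_l; auto. }
  assert (2 * (Rabs t / y) ^ 3 <= 2 * B ^ 2 * Rabs t / y ^ 3).
  { replace (2 * (Rabs t / y) ^ 3) with (2 * Rabs t ^ 2 * Rabs t / y ^ 3) by (field; lra).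
    unfold Rdiv. apply Rmult_le_compat_r; [left; apply Rinv_0_lt_compat, pow_lt; lra|].
    apply Rmult_le_compat_r; [lra|]. apply Rmult_le_compat_l; [lra|].
    apply pow_incr. lra. }
  replace (2 * (1 + B ^ 2) * Rabs t / y ^ 3) with (2 * Rabs t / y ^ 3 + 2 * B ^ 2 * Rabs t / y ^ 3)
    by (field; lra).
  lra.
Qed.

Lemma inv_cube_le_telescope y : 1 <= y ->
  1 / y ^ 3 <= 1 / (2 * (y - 1/2) ^ 2) - 1 / (2 * (y + 1 - 1/2) ^ 2).
Proof.
  intros Hy.
  assert (E : 1 / (2 * (y - 1/2) ^ 2) - 1 / (2 * (y + 1 - 1/2) ^ 2) - 1 / y ^ 3
            = (y ^ 4 - (y ^ 2 - 1/4) ^ 2) / (y ^ 3 * (y ^ 2 - 1/4) ^ 2)) by (field; repeat split; nra).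
  assert (0 <= (y ^ 4 - (y ^ 2 - 1/4) ^ 2) / (y ^ 3 * (y ^ 2 - 1/4) ^ 2)).
  { apply Rdiv_le_0_compat; [nra|]. apply Rmult_lt_0_compat; apply pow_lt; nra. }
  lra.
Qed.

Lemma telescope_majorant_le y : 1 <= y -> 0 <= 1 / (2 * (y - 1/2) ^ 2) <= 2 / y ^ 2.
Proof.
  intros Hy. split.
  { left; apply Rdiv_lt_0_compat; [lra|]; apply Rmult_lt_0_compat; [lra|]; apply pow_lt; lra. }
  assert (2 / y ^ 2 - 1 / (2 * (y - 1/2) ^ 2)
          = (4 * (y - 1/2) ^ 2 - y ^ 2) / (2 * y ^ 2 * (y - 1/2) ^ 2))
    by (field; split; lra).
  assert (0 <= (4 * (y - 1/2) ^ 2 - y ^ 2) / (2 * y ^ 2 * (y - 1/2) ^ 2)).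
  { apply Rdiv_le_0_compat; [nra|]. repeat apply Rmult_lt_0_compat; try apply pow_lt; lra. }
  lra.
Qed.

Section LogConvexSolution.

Variable L : R -> R.
Hypothesis L_succ : forall z, 0 < z -> L (z + 1) = L z + ln z.
Hypothesis L_convex : forall x y l, 0 < x -> 0 < y -> 0 <= l <= 1 ->
  L (l * x + (1 - l) * y) <= l * L x + (1 - l) * L y.

Lemma L_chord a b c : 0 < a -> a < b -> b < c ->
  (c - a) * L b <= (c - b) * L a + (b - a) * L c.
Proof.
  intros Ha Hab Hbc. set (l := (c - b) / (c - a)).
  assert (Hl : 0 <= l <= 1).
  { unfold l. split; [apply Rdiv_le_0_compat; lra|].
    apply Rmult_le_reg_r with (c - a); [lra|]. field_simplify; lra. }
  pose proof (L_convex a c l Ha ltac:(lra) Hl) as H.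
  replace (l * a + (1 - l) * c) with b in H by (unfold l; field; lra).
  apply Rmult_le_compat_l with (r := c - a) in H; [|lra].
  replace ((c - a) * (l * L a + (1 - l) * L c)) with ((c - b) * L a + (b - a) * L c) in H
    by (unfold l; field; lra).
  exact H.
Qed.

(* The slopes of [L] are squeezed between those over [a-1, a] and [b, b+1]. *)
Lemma L_increment_bounds a b : 1 < a -> a <= b ->
  (b - a) * ln (a - 1) <= L b - L a <= (b - a) * ln b.
Proof.
  intros Ha [Hab|<-]; [|lra].
  pose proof (L_chord (a - 1) a b ltac:(lra) ltac:(lra) Hab).
  pose proof (L_chord a b (b + 1) ltac:(lra) Hab ltac:(lra)).
  pose proof (L_succ (a - 1) ltac:(lra)). pose proof (L_succ b ltac:(lra)).
  replace (a - 1 + 1) with a in * by ring.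
  split; nra.
Qed.

Lemma L_increment_approx y t : Rabs t + 1 < y ->
  Rabs (L (y + t) - L y - t * ln y) <= Rabs t * (Rabs t + 1) / (y - Rabs t - 1).
Proof.
  intros Hy. destruct (Rle_dec 0 t) as [Ht|Ht].
  - rewrite (Rabs_right t) in * by lra.
    pose proof (L_increment_bounds y (y + t) ltac:(lra) ltac:(lra)).
    pose proof (ln_sub_le_div y (y + t) ltac:(lra) ltac:(lra)).
    pose proof (ln_sub_le_div (y - 1) y ltac:(lra) ltac:(lra)).
    assert ((y + t - y) / y <= (t + 1) / (y - t - 1) /\
            (y - (y - 1)) / (y - 1) <= (t + 1) / (y - t - 1))
      as [? ?].
    { split; unfold Rdiv; apply Rmult_le_compat; try lra;
        try (left; apply Rinv_0_lt_compat; lra); apply Rinv_le_contravar; lra. }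
    assert (t * (ln (y + t) - ln y) <= t * ((t + 1) / (y - t - 1))) by (apply Rmult_le_compat_l; lra).
    assert (t * (ln y - ln (y - 1)) <= t * ((t + 1) / (y - t - 1))) by (apply Rmult_le_compat_l; lra).
    replace (t * (t + 1) / (y - t - 1)) with (t * ((t + 1) / (y - t - 1))) by (field; lra).
    replace (y + t - y) with t in * by ring. apply Rabs_le. lra.
  - rewrite (Rabs_left t) in * by lra.
    pose proof (L_increment_bounds (y + t) y ltac:(lra) ltac:(lra)).
    pose proof (ln_sub_le_div (y + t - 1) y ltac:(lra) ltac:(lra)).
    pose proof (ln_sub_nonneg (y + t - 1) y ltac:(lra) ltac:(lra)).
    replace (y - (y + t - 1)) with (- t + 1) in * by ring.
    replace (y - - t - 1) with (y + t - 1) by ring.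
    assert (- t * (ln y - ln (y + t - 1)) <= - t * ((- t + 1) / (y + t - 1)))
      by (apply Rmult_le_compat_l; lra).
    replace (- t * (- t + 1) / (y + t - 1)) with (- t * ((- t + 1) / (y + t - 1))) by (field; lra).
    apply Rabs_le. nra.
Qed.

Definition shift_error (t y : R) : R := L (y + t) - L y - t * ln y - (t ^ 2 - t) / (2 * y).

Lemma shift_error_small t y B : 0 <= B -> Rabs t <= B -> B + 1 < y ->
  Rabs (shift_error t y) <= 2 * (B + 1) ^ 2 / (y - B - 1).
Proof.
  intros HB Ht Hy. unfold shift_error. pose proof (Rabs_pos t).
  pose proof (L_increment_approx y t ltac:(lra)).
  assert (Rabs t * (Rabs t + 1) / (y - Rabs t - 1) <= (B + 1) ^ 2 / (y - B - 1)).
  { unfold Rdiv. apply Rmult_le_compat; [nra | left; apply Rinv_0_lt_compat; lra | nra |].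
    apply Rinv_le_contravar; lra. }
  assert (Rabs ((t ^ 2 - t) / (2 * y)) <= (B + 1) ^ 2 / (y - B - 1)).
  { rewrite Rabs_div, (Rabs_right (2 * y)) by lra.
    replace (t ^ 2 - t) with (t * (t - 1)) by ring. rewrite Rabs_mult.
    unfold Rdiv. apply Rmult_le_compat; [apply Rmult_le_pos; apply Rabs_pos
      | left; apply Rinv_0_lt_compat; lra | | apply Rinv_le_contravar; lra].
    apply Rmult_le_compat; try apply Rabs_pos; try lra.
    unfold Rminus. eapply Rle_trans; [apply Rabs_triang|]. rewrite Rabs_Ropp, Rabs_R1. lra. }
  unfold Rminus at 1. eapply Rle_trans; [apply Rabs_triang|]. rewrite Rabs_Ropp. lra.
Qed.

Lemma shift_error_step t y B : 0 <= B -> Rabs t <= B -> 1 <= y -> Rabs t <= y / 2 ->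
  Rabs (shift_error t y - shift_error t (y + 1))
    <= (2 * (1 + B ^ 2) + (B + 1) / 2) * Rabs t / y ^ 3.
Proof.
  intros HB HtB Hy Hty.
  assert (Hyt : 0 < y + t) by (apply Rabs_le_between in Hty; lra).
  assert (E : shift_error t y - shift_error t (y + 1) =
    (t * (ln (y + 1) - ln y) - (ln (y + t) - ln y) - (t ^ 2 - t) / (2 * y ^ 2))
    + (t ^ 2 - t) / (2 * y ^ 2 * (y + 1))).
  { unfold shift_error. replace (y + 1 + t) with (y + t + 1) by ring.
    rewrite (L_succ (y + t)), (L_succ y) by lra. field; lra. }
  rewrite E. eapply Rle_trans; [apply Rabs_triang|].
  pose proof (ln_shift_second_order y t B Hy HtB Hty). pose proof (Rabs_pos t).
  assert (Rabs ((t ^ 2 - t) / (2 * y ^ 2 * (y + 1))) <= (B + 1) / 2 * Rabs t / y ^ 3).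
  { assert (0 < y ^ 3) by (apply pow_lt; lra).
    rewrite Rabs_div, (Rabs_right (2 * y ^ 2 * (y + 1))) by nra.
    replace (t ^ 2 - t) with (t * (t - 1)) by ring. rewrite Rabs_mult.
    assert (Rabs (t - 1) <= B + 1).
    { unfold Rminus. eapply Rle_trans; [apply Rabs_triang|]. rewrite Rabs_Ropp, Rabs_R1. lra. }
    apply Rmult_le_reg_r with (2 * y ^ 2 * (y + 1)); [nra|].
    replace (Rabs t * Rabs (t - 1) / (2 * y ^ 2 * (y + 1)) * (2 * y ^ 2 * (y + 1)))
      with (Rabs t * Rabs (t - 1)) by (field; nra).
    replace ((B + 1) / 2 * Rabs t / y ^ 3 * (2 * y ^ 2 * (y + 1)))
      with ((B + 1) * Rabs t * (1 + 1 / y)) by (field; lra).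
    assert (Rabs t * Rabs (t - 1) <= Rabs t * (B + 1)) by (apply Rmult_le_compat_l; lra).
    assert (0 <= (B + 1) * Rabs t * (1 / y))
      by (apply Rmult_le_pos; [nra | left; apply Rdiv_lt_0_compat; lra]).
    lra. }
  replace ((2 * (1 + B ^ 2) + (B + 1) / 2) * Rabs t / y ^ 3)
    with (2 * (1 + B ^ 2) * Rabs t / y ^ 3 + (B + 1) / 2 * Rabs t / y ^ 3) by (field; lra).
  lra.
Qed.

Lemma shift_error_telescope t x B N : 0 <= B -> Rabs t <= B -> 1 <= x -> Rabs t <= x / 2 ->
  Rabs (shift_error t x - shift_error t (x + INR N))
    <= (2 * (1 + B ^ 2) + (B + 1) / 2) * Rabs t
       * (1 / (2 * (x - 1/2) ^ 2) - 1 / (2 * (x + INR N - 1/2) ^ 2)).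
Proof.
  intros HB HtB Hx Htx. set (K := 2 * (1 + B ^ 2) + (B + 1) / 2).
  assert (HK : 0 <= K * Rabs t) by (apply Rmult_le_pos; [unfold K; nra | apply Rabs_pos]).
  induction N as [|N IH].
  - simpl INR. rewrite !Rplus_0_r, !Rminus_diag, Rabs_R0, Rmult_0_r. lra.
  - set (y := x + INR N) in *. pose proof (pos_INR N).
    replace (x + INR (S N)) with (y + 1) by (unfold y; rewrite S_INR; ring).
    pose proof (shift_error_step t y B HB HtB ltac:(unfold y; lra) ltac:(unfold y; lra)).
    pose proof (inv_cube_le_telescope y ltac:(unfold y; lra)).
    assert (K * Rabs t / y ^ 3 <= K * Rabs t * (1 / (2 * (y - 1/2) ^ 2) - 1 / (2 * (y + 1 - 1/2) ^ 2))).
    { replace (K * Rabs t / y ^ 3) with (K * Rabs t * (1 / y ^ 3))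
        by (field; unfold y; lra).
      apply Rmult_le_compat_l; [exact HK | lra]. }
    replace (shift_error t x - shift_error t (y + 1))
      with ((shift_error t x - shift_error t y) + (shift_error t y - shift_error t (y + 1))) by ring.
    eapply Rle_trans; [apply Rabs_triang|]. unfold K in *. lra.
Qed.

(* Letting the shift go to infinity: the error vanishes there, and the telescoping bound
   is summable. *)
Lemma shift_error_bound t x B : 0 <= B -> Rabs t <= B -> 1 <= x -> Rabs t <= x / 2 ->
  Rabs (shift_error t x) <= (4 * (1 + B ^ 2) + B + 1) * Rabs t / x ^ 2.
Proof.
  intros HB HtB Hx Htx. apply le_of_forall_eps. intros eps Heps.
  destruct (INR_unbounded (2 * (B + 1) ^ 2 / eps + B + 1)) as [N HN].
  assert (0 <= 2 * (B + 1) ^ 2 / eps) by (apply Rdiv_le_0_compat; nra).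
  pose proof (shift_error_telescope t x B N HB HtB Hx Htx).
  pose proof (shift_error_small t (x + INR N) B HB HtB ltac:(lra)) as Hfar.
  assert (2 * (B + 1) ^ 2 / (x + INR N - B - 1) <= eps).
  { apply Rmult_le_reg_r with (x + INR N - B - 1); [lra|].
    replace (2 * (B + 1) ^ 2 / (x + INR N - B - 1) * (x + INR N - B - 1)) with (2 * (B + 1) ^ 2)
      by (field; lra).
    apply Rmult_lt_compat_l with (r := eps) in HN; [|lra].
    replace (eps * (2 * (B + 1) ^ 2 / eps + B + 1)) with (2 * (B + 1) ^ 2 + eps * (B + 1)) in HN
      by (field; lra).
    nra. }
  pose proof (telescope_majorant_le x Hx). pose proof (telescope_majorant_le (x + INR N) ltac:(lra)).
  assert (0 <= (2 * (1 + B ^ 2) + (B + 1) / 2) * Rabs t)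
    by (apply Rmult_le_pos; [nra | apply Rabs_pos]).
  assert ((2 * (1 + B ^ 2) + (B + 1) / 2) * Rabs t
          * (1 / (2 * (x - 1/2) ^ 2) - 1 / (2 * (x + INR N - 1/2) ^ 2))
          <= (4 * (1 + B ^ 2) + B + 1) * Rabs t / x ^ 2).
  { replace ((4 * (1 + B ^ 2) + B + 1) * Rabs t / x ^ 2)
      with ((2 * (1 + B ^ 2) + (B + 1) / 2) * Rabs t * (2 / x ^ 2)) by (field; lra).
    apply Rmult_le_compat_l; lra. }
  replace (shift_error t x)
    with ((shift_error t x - shift_error t (x + INR N)) + shift_error t (x + INR N)) by ring.
  eapply Rle_trans; [apply Rabs_triang|]. lra.
Qed.

End LogConvexSolution.

Lemma ln_Gamma_succ z : 0 < z -> ln (Gamma (z + 1)) = ln (Gamma z) + ln z.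
Proof. intros Hz. rewrite Gamma_succ, ln_mult by (auto; apply Gamma_pos; auto). ring. Qed.

Lemma ln_Gamma_shift_expansion x t B : 0 <= B -> Rabs t <= B -> 1 <= x -> Rabs t <= x / 2 ->
  Rabs (ln (Gamma (x + t)) - ln (Gamma x) - t * ln x - (t ^ 2 - t) / (2 * x))
    <= (4 * (1 + B ^ 2) + B + 1) * Rabs t / x ^ 2.
Proof. exact (shift_error_bound (fun z => ln (Gamma z)) ln_Gamma_succ ln_Gamma_convex t x B). Qed.

(* A discrete primitive: its increments [F m - F (m - 1)] match the expansion of
   [ln Gamma (m/2 + t) - ln Gamma (m/2 + s)] up to [O(1/m^2)], and [F n - F (n - p)] is the
   main term of the theorem. *)
Definition ratio_primitive (t s m : R) : R :=
  (t - s) * (m * ln m - m - m * ln 2 - ln m / 2) + (t ^ 2 - s ^ 2) * ln m.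

Lemma ln_one_sub_inv_expansion m : 2 <= m ->
  Rabs (ln (1 + - (1 / m)) + 1 / m + 1 / (2 * m ^ 2)) <= 2 / m ^ 3.
Proof.
  intros Hm.
  assert (0 < 1 / m <= 1 / 2).
  { split; [apply Rdiv_lt_0_compat; lra|]. apply Rmult_le_reg_r with m; [lra|]. field_simplify; lra. }
  pose proof (ln_taylor2 (- (1 / m)) ltac:(lra)) as Ht2.
  rewrite Rabs_Ropp, (Rabs_right (1 / m)) in Ht2 by lra.
  replace (2 / m ^ 3) with (2 * (1 / m) ^ 3) by (field; lra).
  replace (ln (1 + - (1 / m)) + 1 / m + 1 / (2 * m ^ 2))
    with (ln (1 + - (1 / m)) - - (1 / m) + (- (1 / m)) ^ 2 / 2) by (field; lra).
  exact Ht2.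
Qed.

Lemma ratio_primitive_step_eq m t s : 1 < m ->
  ratio_primitive t s m - ratio_primitive t s (m - 1)
    - ((t - s) * ln (m / 2) + ((t ^ 2 - t) - (s ^ 2 - s)) / m)
  = - ((t - s) * (3 / (4 * m ^ 2) + (m - 3 / 2) * (ln (1 + - (1 / m)) + 1 / m + 1 / (2 * m ^ 2)))
       + (t ^ 2 - s ^ 2) * (- 1 / (2 * m ^ 2) + (ln (1 + - (1 / m)) + 1 / m + 1 / (2 * m ^ 2)))).
Proof.
  intros Hm.
  assert (Hlm1 : ln (m - 1) = ln m + ln (1 + - (1 / m))).
  { rewrite <- ln_mult by (try (replace (1 + - (1 / m)) with ((m - 1) / m) by (field; lra);
                               apply Rdiv_lt_0_compat); lra).
    f_equal. field. lra. }
  unfold ratio_primitive. rewrite ln_div, Hlm1 by lra. field. lra.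
Qed.

Lemma ratio_primitive_step m t s B : 2 <= m -> Rabs t <= B -> Rabs s <= B ->
  Rabs (ratio_primitive t s m - ratio_primitive t s (m - 1)
        - ((t - s) * ln (m / 2) + ((t ^ 2 - t) - (s ^ 2 - s)) / m))
    <= (3 + 4 * B) * (Rabs t + Rabs s) / m ^ 2.
Proof.
  intros Hm Ht Hs. rewrite ratio_primitive_step_eq, Rabs_Ropp by lra.
  pose proof (ln_one_sub_inv_expansion m Hm) as HH.
  set (H := ln (1 + - (1 / m)) + 1 / m + 1 / (2 * m ^ 2)) in *.
  assert (Hm2 : 0 < m ^ 2) by (apply pow_lt; lra).
  assert (HX : Rabs (3 / (4 * m ^ 2) + (m - 3 / 2) * H) <= 3 / m ^ 2).
  { eapply Rle_trans; [apply Rabs_triang|]. rewrite Rabs_mult.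
    rewrite (Rabs_right (3 / (4 * m ^ 2))) by (left; apply Rdiv_lt_0_compat; lra).
    rewrite (Rabs_right (m - 3 / 2)) by lra.
    assert ((m - 3 / 2) * Rabs H <= m * (2 / m ^ 3))
      by (apply Rmult_le_compat; try lra; apply Rabs_pos).
    replace (m * (2 / m ^ 3)) with (2 / m ^ 2) in H0 by (field; lra).
    assert (3 / m ^ 2 = 3 / (4 * m ^ 2) + 2 / m ^ 2 + 1 / (4 * m ^ 2)) by (field; lra).
    assert (0 < 1 / (4 * m ^ 2)) by (apply Rdiv_lt_0_compat; lra). lra. }
  assert (HY : Rabs (- 1 / (2 * m ^ 2) + H) <= 2 / m ^ 2).
  { eapply Rle_trans; [apply Rabs_triang|].
    replace (- 1 / (2 * m ^ 2)) with (- (1 / (2 * m ^ 2))) by (field; lra).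
    rewrite Rabs_Ropp, Rabs_right by (left; apply Rdiv_lt_0_compat; lra).
    assert (2 / m ^ 3 <= 1 / m ^ 2).
    { apply Rmult_le_reg_r with (m ^ 3); [apply pow_lt; lra|]. field_simplify; lra. }
    assert (2 / m ^ 2 = 1 / (2 * m ^ 2) + 1 / m ^ 2 + 1 / (2 * m ^ 2)) by (field; lra).
    assert (0 < 1 / (2 * m ^ 2)) by (apply Rdiv_lt_0_compat; lra). lra. }
  assert (Hts : Rabs (t - s) <= Rabs t + Rabs s).
  { unfold Rminus. eapply Rle_trans; [apply Rabs_triang|]. rewrite Rabs_Ropp. lra. }
  assert (Hts2 : Rabs (t ^ 2 - s ^ 2) <= 2 * B * (Rabs t + Rabs s)).
  { replace (t ^ 2 - s ^ 2) with ((t + s) * (t - s)) by ring. rewrite Rabs_mult.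
    apply Rmult_le_compat; try apply Rabs_pos; auto.
    eapply Rle_trans; [apply Rabs_triang | lra]. }
  eapply Rle_trans; [apply Rabs_triang|]. rewrite !Rabs_mult.
  pose proof (Rmult_le_compat _ _ _ _ (Rabs_pos _) (Rabs_pos _) Hts HX).
  pose proof (Rmult_le_compat _ _ _ _ (Rabs_pos _) (Rabs_pos _) Hts2 HY).
  replace ((3 + 4 * B) * (Rabs t + Rabs s) / m ^ 2)
    with ((Rabs t + Rabs s) * (3 / m ^ 2) + 2 * B * (Rabs t + Rabs s) * (2 / m ^ 2)) by (field; lra).
  lra.
Qed.

Definition ratio_const (B : R) : R := 4 * (4 * (1 + B ^ 2) + B + 1) + 3 + 4 * B.

Lemma ratio_const_nonneg B : 0 <= B -> 0 <= ratio_const B.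
Proof. intros; unfold ratio_const. nra. Qed.

Lemma ln_Gamma_ratio_step m t s B : 2 <= m -> 0 <= B -> Rabs t <= B -> Rabs s <= B ->
  Rabs t <= m / 4 -> Rabs s <= m / 4 ->
  Rabs (ln (Gamma (m / 2 + t)) - ln (Gamma (m / 2 + s))
        - (ratio_primitive t s m - ratio_primitive t s (m - 1)))
    <= ratio_const B * (Rabs t + Rabs s) / m ^ 2.
Proof.
  intros Hm HB Ht Hs Htm Hsm.
  pose proof (ln_Gamma_shift_expansion (m / 2) t B HB Ht ltac:(lra) ltac:(lra)) as Et.
  pose proof (ln_Gamma_shift_expansion (m / 2) s B HB Hs ltac:(lra) ltac:(lra)) as Es.
  pose proof (ratio_primitive_step m t s B Hm Ht Hs) as Ep.
  replace ((m / 2) ^ 2) with (m ^ 2 / 4) in Et, Es by field.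
  replace (2 * (m / 2)) with m in Et, Es by field.
  set (c := 4 * (1 + B ^ 2) + B + 1) in *.
  replace (ratio_const B * (Rabs t + Rabs s) / m ^ 2)
    with (c * Rabs t / (m ^ 2 / 4) + c * Rabs s / (m ^ 2 / 4)
          + (3 + 4 * B) * (Rabs t + Rabs s) / m ^ 2)
    by (unfold ratio_const, c; field; lra).
  set (et := ln (Gamma (m / 2 + t)) - ln (Gamma (m / 2)) - t * ln (m / 2) - (t ^ 2 - t) / m) in *.
  set (es := ln (Gamma (m / 2 + s)) - ln (Gamma (m / 2)) - s * ln (m / 2) - (s ^ 2 - s) / m) in *.
  set (ep := ratio_primitive t s m - ratio_primitive t s (m - 1)
             - ((t - s) * ln (m / 2) + ((t ^ 2 - t) - (s ^ 2 - s)) / m)) in *.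
  replace (ln (Gamma (m / 2 + t)) - ln (Gamma (m / 2 + s))
           - (ratio_primitive t s m - ratio_primitive t s (m - 1)))
    with (et + - es + - ep) by (unfold et, es, ep; field; lra).
  eapply Rle_trans; [apply Rabs_triang|]. rewrite Rabs_Ropp.
  eapply Rle_trans; [apply Rplus_le_compat_r, Rabs_triang|]. rewrite Rabs_Ropp. lra.
Qed.

Lemma prod_Gamma_pos k z : INR k / 2 < z + 1 / 2 -> 0 < prod_Gamma k z.
Proof.
  induction k as [|k IH]; simpl prod_Gamma; [lra|].
  rewrite S_INR. intros Hk. pose proof (pos_INR k).
  apply Rmult_lt_0_compat; [apply IH; lra | apply Gamma_pos; lra].
Qed.

Lemma ln_prod_Gamma_ratio n p t s B k : (p < n)%nat -> 0 <= B ->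
  Rabs t <= B -> Rabs s <= B ->
  Rabs t <= (INR n - INR p + 1) / 4 -> Rabs s <= (INR n - INR p + 1) / 4 -> (k <= p)%nat ->
  Rabs (ln (prod_Gamma k (INR n / 2 + t)) - ln (prod_Gamma k (INR n / 2 + s))
        - (ratio_primitive t s (INR n) - ratio_primitive t s (INR n - INR k)))
    <= ratio_const B * (Rabs t + Rabs s) * (1 / (INR n - INR k) - 1 / INR n).
Proof.
  intros Hpn HB Ht Hs Ht' Hs' Hk.
  assert (Hnp : INR p + 1 <= INR n) by (rewrite <- S_INR; apply le_INR; lia).
  pose proof (pos_INR p). pose proof (ratio_const_nonneg B HB).
  assert (Hts : 0 <= ratio_const B * (Rabs t + Rabs s))
    by (apply Rmult_le_pos; [|pose proof (Rabs_pos t); pose proof (Rabs_pos s)]; lra).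
  induction k as [|k IH].
  - simpl prod_Gamma. change (INR 0) with 0.
    rewrite ln_1, !Rminus_0_r, !Rminus_diag, Rabs_R0. lra.
  - assert (Hkp : INR k + 1 <= INR p) by (rewrite <- S_INR; apply le_INR; lia).
    set (m := INR n - INR k).
    assert (Hz : forall u, Rabs u <= m / 4 -> INR k / 2 < INR n / 2 + u + 1 / 2)
      by (intros u Hu; apply Rabs_le_between in Hu; unfold m in Hu; lra).
    simpl prod_Gamma.
    replace (INR n / 2 + t - INR k / 2) with (m / 2 + t) by (unfold m; field).
    replace (INR n / 2 + s - INR k / 2) with (m / 2 + s) by (unfold m; field).
    rewrite !ln_mult
      by (apply prod_Gamma_pos || apply Gamma_pos; apply Rabs_le_between in Ht', Hs'; unfold m; lra).
    rewrite S_INR. replace (INR n - (INR k + 1)) with (m - 1) by (unfold m; ring).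
    pose proof (IH ltac:(lia)) as Hk'. fold m in Hk'.
    pose proof (ln_Gamma_ratio_step m t s B ltac:(unfold m; lra) HB Ht Hs
                  ltac:(unfold m; lra) ltac:(unfold m; lra)) as Hstep.
    assert (ratio_const B * (Rabs t + Rabs s) / m ^ 2
            <= ratio_const B * (Rabs t + Rabs s) * (1 / (m - 1) - 1 / m)).
    { unfold Rdiv at 1. apply Rmult_le_compat_l; [exact Hts|].
      replace (1 / (m - 1) - 1 / m) with (/ (m * (m - 1))) by (field; unfold m; lra).
      apply Rinv_le_contravar; [unfold m; nra | simpl; unfold m; nra]. }
    match goal with |- Rabs ?e <= _ => replace e with
      ((ln (prod_Gamma k (INR n / 2 + t)) - ln (prod_Gamma k (INR n / 2 + s))
        - (ratio_primitive t s (INR n) - ratio_primitive t s m))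
       + (ln (Gamma (m / 2 + t)) - ln (Gamma (m / 2 + s))
          - (ratio_primitive t s m - ratio_primitive t s (m - 1)))) by ring end.
    eapply Rle_trans; [apply Rabs_triang|]. lra.
Qed.

Lemma r_seq_sq p n : (p n < n)%nat ->
  r_seq p n ^ 2 = ln (INR n) - ln (INR n - INR (p n)).
Proof.
  intros Hpn. assert (INR (p n) < INR n) by (apply lt_INR; lia).
  pose proof (pos_INR (p n)).
  unfold r_seq. rewrite pow2_sqrt.
  - replace (1 - INR (p n) / INR n) with ((INR n - INR (p n)) / INR n) by (field; lra).
    rewrite ln_div by lra. ring.
  - replace (1 - INR (p n) / INR n) with ((INR n - INR (p n)) / INR n) by (field; lra).
    rewrite ln_div by lra. pose proof (ln_le (INR n - INR (p n)) (INR n) ltac:(lra) ltac:(lra)). lra.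
Qed.

Lemma ln_mGamma_ratio_bound n (p : nat -> nat) t s B : (p n < n)%nat -> 0 <= B ->
  Rabs t <= B -> Rabs s <= B ->
  Rabs t <= (INR n - INR (p n) + 1) / 4 -> Rabs s <= (INR n - INR (p n) + 1) / 4 ->
  Rabs (ln (mGamma (p n) (INR n / 2 + t) / mGamma (p n) (INR n / 2 + s))
       - ( INR (p n) * (t - s) * (ln (INR n) - 1 - ln 2)
           + (r_seq p n) ^ 2 * ((t ^ 2 - s ^ 2) - (INR (p n) - INR n + 1 / 2) * (t - s)) ))
   <= ratio_const B * (Rabs t + Rabs s) / (INR n - INR (p n)).
Proof.
  intros Hpn HB Ht Hs Ht' Hs'.
  pose proof (ln_prod_Gamma_ratio n (p n) t s B (p n) Hpn HB Ht Hs Ht' Hs' (Nat.le_refl _)) as E.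
  assert (Hnp : INR (p n) + 1 <= INR n) by (rewrite <- S_INR; apply le_INR; lia).
  pose proof (pos_INR (p n)). pose proof (ratio_const_nonneg B HB).
  pose proof (Rabs_pos t). pose proof (Rabs_pos s).
  assert (Hprod : forall u, Rabs u <= (INR n - INR (p n) + 1) / 4 ->
                   0 < prod_Gamma (p n) (INR n / 2 + u))
    by (intros u Hu; apply prod_Gamma_pos; apply Rabs_le_between in Hu; lra).
  assert (HR : 0 < Rpower PI (INR (p n) * (INR (p n) - 1) / 4)) by apply exp_pos.
  unfold mGamma. rewrite ln_div, !ln_mult by (apply Rmult_lt_0_compat || idtac; auto).
  rewrite r_seq_sq by exact Hpn.
  replace (INR (p n) * (t - s) * (ln (INR n) - 1 - ln 2) +
     (ln (INR n) - ln (INR n - INR (p n))) * (t ^ 2 - s ^ 2 - (INR (p n) - INR n + 1 / 2) * (t - s)))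
    with (ratio_primitive t s (INR n) - ratio_primitive t s (INR n - INR (p n)))
    by (unfold ratio_primitive; field).
  match goal with |- Rabs ?e <= _ => replace e with
    (ln (prod_Gamma (p n) (INR n / 2 + t)) - ln (prod_Gamma (p n) (INR n / 2 + s))
     - (ratio_primitive t s (INR n) - ratio_primitive t s (INR n - INR (p n)))) by ring end.
  eapply Rle_trans; [exact E|].
  replace (ratio_const B * (Rabs t + Rabs s) / (INR n - INR (p n)))
    with (ratio_const B * (Rabs t + Rabs s) * (1 / (INR n - INR (p n)))) by (field; lra).
  apply Rmult_le_compat_l; [nra|].
  assert (0 < 1 / INR n) by (apply Rdiv_lt_0_compat; lra). lra.
Qed.

Lemma r_seq_sq_ge_ratio p n : (p n < n)%nat -> INR (p n) / INR n <= r_seq p n ^ 2.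
Proof.
  intros Hpn. assert (INR (p n) < INR n) by (apply lt_INR; lia). pose proof (pos_INR (p n)).
  unfold r_seq. rewrite pow2_sqrt;
    pose proof (ln_le_sub1 (1 - INR (p n) / INR n)
      ltac:(replace (1 - INR (p n) / INR n) with ((INR n - INR (p n)) / INR n) by (field; lra);
            apply Rdiv_lt_0_compat; lra));
    [lra|].
  assert (0 <= INR (p n) / INR n) by (apply Rdiv_le_0_compat; lra). lra.
Qed.

(* Either the gap [n - p] is at most [n e^(-M^2)], and then [r_n^2 = ln (n / (n - p)) >= M^2],
   or it is larger, and then [r_n^2 >= p/n >= y/2] suffices. *)
Lemma r_seq_mul_gap_ge p n y M : (p n < n)%nat -> 0 < y -> 0 < M ->
  y / 2 <= INR (p n) / INR n -> 2 * exp (M ^ 2) * M ^ 2 / y + 1 <= INR n ->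
  M <= r_seq p n * (INR n - INR (p n)).
Proof.
  intros Hpn Hy HM Hv Hn.
  assert (Hq : INR (p n) + 1 <= INR n) by (rewrite <- S_INR; apply le_INR; lia).
  pose proof (pos_INR (p n)).
  set (K := exp (M ^ 2)) in *. assert (HK : 0 < K) by apply exp_pos.
  set (q := INR n - INR (p n)).
  pose proof (r_seq_sq p n Hpn) as Hr2. pose proof (r_seq_sq_ge_ratio p n Hpn).
  set (r := r_seq p n) in *.
  assert (Hr : 0 <= r) by apply sqrt_pos.
  assert (Hmain : M ^ 2 <= r ^ 2 * q).
  { destruct (Rle_dec q (INR n / K)) as [Hsmall|Hlarge].
    - assert (ln K <= ln (INR n) - ln q).
      { rewrite <- ln_div by (unfold q; lra). apply ln_le; [apply exp_pos|].
        apply Rmult_le_reg_r with (q / K); [apply Rdiv_lt_0_compat; unfold q; lra|].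
        replace (K * (q / K)) with q by (field; lra).
        replace (INR n / q * (q / K)) with (INR n / K) by (field; unfold q; lra). lra. }
      unfold K in H1. rewrite ln_exp in H1. fold q in Hr2.
      assert (r ^ 2 <= r ^ 2 * q) by (rewrite <- (Rmult_1_r (r ^ 2)) at 1;
        apply Rmult_le_compat_l; [nra | unfold q; lra]).
      lra.
    - assert (y / 2 * (INR n / K) <= r ^ 2 * q) by (apply Rmult_le_compat; try lra;
        apply Rdiv_le_0_compat; lra).
      assert (M ^ 2 <= y / 2 * (INR n / K)); [|lra].
      apply Rmult_le_reg_r with (2 * K / y); [apply Rdiv_lt_0_compat; lra|].
      replace (y / 2 * (INR n / K) * (2 * K / y)) with (INR n) by (field; lra).
      replace (M ^ 2 * (2 * K / y)) with (2 * K * M ^ 2 / y) by (field; lra). lra. }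
  assert (r ^ 2 * q <= (r * q) ^ 2) by (unfold q in *; rewrite Rpow_mult_distr; nra).
  assert (0 <= r * q) by (apply Rmult_le_pos; unfold q; lra).
  nra.
Qed.

Lemma r_seq_ge_sqrt p n y : (p n < n)%nat -> y / 2 <= INR (p n) / INR n ->
  sqrt (y / 2) <= r_seq p n.
Proof.
  intros Hpn Hv. rewrite <- (sqrt_pow2 (r_seq p n)) by apply sqrt_pos.
  apply sqrt_le_1_alt. pose proof (r_seq_sq_ge_ratio p n Hpn). lra.
Qed.

Lemma big_O_r_seq_common (p : nat -> nat) (s t : nat -> R) :
  (exists C N, forall n, (N <= n)%nat -> Rabs (s n) <= C / r_seq p n) ->
  (exists C N, forall n, (N <= n)%nat -> Rabs (t n) <= C / r_seq p n) ->
  exists C N, 0 < C /\ forall n, (N <= n)%nat ->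
    Rabs (t n) <= C / r_seq p n /\ Rabs (s n) <= C / r_seq p n.
Proof.
  intros [Cs [Ns Hs]] [Ct [Nt Ht]].
  exists (Rabs Ct + Rabs Cs + 1), (Ns + Nt)%nat.
  pose proof (Rle_abs Cs). pose proof (Rle_abs Ct). pose proof (Rabs_pos Cs). pose proof (Rabs_pos Ct).
  split; [lra|]. intros n Hn.
  assert (Hinv : 0 <= / r_seq p n).
  { destruct (Rle_lt_or_eq_dec 0 (r_seq p n) (sqrt_pos _)) as [Hr|Hr];
      [left; apply Rinv_0_lt_compat, Hr | rewrite <- Hr, Rinv_0; lra]. }
  split; [eapply Rle_trans; [apply Ht; lia|] | eapply Rle_trans; [apply Hs; lia|]];
    apply Rmult_le_compat_r; lra.
Qed.

Lemma mGamma_ratio_error_lt n (p : nat -> nat) t s C B M eps : (p n < n)%nat -> 0 < C ->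
  0 < r_seq p n -> Rabs t <= C / r_seq p n -> Rabs s <= C / r_seq p n -> C / r_seq p n <= B ->
  4 * C <= M -> 2 * ratio_const B * C < eps * M -> M <= r_seq p n * (INR n - INR (p n)) ->
  Rabs (ln (mGamma (p n) (INR n / 2 + t) / mGamma (p n) (INR n / 2 + s))
       - ( INR (p n) * (t - s) * (ln (INR n) - 1 - ln 2)
           + (r_seq p n) ^ 2 * ((t ^ 2 - s ^ 2) - (INR (p n) - INR n + 1 / 2) * (t - s)) ))
   < eps.
Proof.
  intros Hpn HC Hr Ht Hs HB HM Heps Hgap.
  set (r := r_seq p n) in *. set (q := INR n - INR (p n)) in *.
  assert (Hq : 1 <= q) by (unfold q; pose proof (le_INR (S (p n)) n ltac:(lia)) as Hle;
    rewrite S_INR in Hle; lra).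
  assert (0 <= B) by (pose proof (Rabs_pos t); lra).
  assert (HCq : C / r <= (q + 1) / 4).
  { apply Rmult_le_reg_r with (4 * r); [lra|].
    replace (C / r * (4 * r)) with (4 * C) by (field; lra). nra. }
  eapply Rle_lt_trans; [apply (ln_mGamma_ratio_bound n p t s B); [exact Hpn | fold q; lra ..]|].
  fold q. pose proof (ratio_const_nonneg B H).
  apply Rle_lt_trans with (ratio_const B * (2 * C / r) / q).
  { unfold Rdiv. apply Rmult_le_compat_r; [left; apply Rinv_0_lt_compat; lra|].
    apply Rmult_le_compat_l; lra. }
  replace (ratio_const B * (2 * C / r) / q) with (2 * ratio_const B * C / (r * q)) by (field; lra).
  apply Rmult_lt_reg_r with (r * q); [nra|].
  replace (2 * ratio_const B * C / (r * q) * (r * q)) with (2 * ratio_const B * C) by (field; lra).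
  assert (0 < eps) by nra.
  assert (eps * M <= eps * (r * q)) by (apply Rmult_le_compat_l; lra). lra.
Qed.

Theorem lemma4 (p : nat -> nat) (y : R) (s t : nat -> R) :
  (exists N : nat, forall n : nat, (N <= n)%nat -> (p n < n)%nat) ->
  0 < y <= 1 ->
  is_lim_seq (fun n => INR (p n) / INR n) y ->
  (exists C : R, exists N : nat, forall n : nat, (N <= n)%nat ->
      Rabs (s n) <= C / r_seq p n) ->
  (exists C : R, exists N : nat, forall n : nat, (N <= n)%nat ->
      Rabs (t n) <= C / r_seq p n) ->
  is_lim_seq
    (fun n =>
       ln (mGamma (p n) (INR n / 2 + t n) / mGamma (p n) (INR n / 2 + s n))
       - ( INR (p n) * (t n - s n) * (ln (INR n) - 1 - ln 2)
           + (r_seq p n) ^ 2 *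
               ((t n ^ 2 - s n ^ 2)
                - (INR (p n) - INR n + 1 / 2) * (t n - s n)) ))
    0.
Proof.
  intros [N1 Hpn] [Hy0 Hy1] Hlim Hs Ht.
  destruct (big_O_r_seq_common p s t Hs Ht) as [C [N2 [HC Hts]]].
  apply is_lim_seq_spec in Hlim. destruct (Hlim (mkposreal (y / 2) ltac:(lra))) as [N3 Hratio].
  apply is_lim_seq_spec. intros eps. pose proof (cond_pos eps).
  assert (Hr0 : 0 < sqrt (y / 2)) by (apply sqrt_lt_R0; lra).
  set (B := C / sqrt (y / 2)).
  pose proof (ratio_const_nonneg B ltac:(unfold B; apply Rdiv_le_0_compat; lra)).
  set (M := 4 * C + 2 * ratio_const B * C / eps + 1).
  assert (HM : 4 * C <= M /\ 2 * ratio_const B * C < eps * M).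
  { assert (0 <= 2 * ratio_const B * C / eps) by (apply Rdiv_le_0_compat; [apply Rmult_le_pos|]; lra).
    unfold M. split; [lra|]. rewrite !Rmult_plus_distr_l.
    replace (eps * (2 * ratio_const B * C / eps)) with (2 * ratio_const B * C) by (field; lra). nra. }
  destruct (INR_unbounded (2 * exp (M ^ 2) * M ^ 2 / y + 1)) as [N4 HN4].
  exists (N1 + N2 + N3 + N4)%nat. intros n Hn. rewrite Rminus_0_r.
  specialize (Hpn n ltac:(lia)). destruct (Hts n ltac:(lia)) as [Htn Hsn].
  assert (Hv : y / 2 <= INR (p n) / INR n)
    by (pose proof (Hratio n ltac:(lia)) as Hr; apply Rabs_def2 in Hr; simpl in Hr; lra).
  pose proof (r_seq_ge_sqrt p n y Hpn Hv) as Hr.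
  apply (mGamma_ratio_error_lt n p (t n) (s n) C B M eps); try tauto; try lra.
  - apply Rmult_le_compat_l; [lra | apply Rinv_le_contravar; lra].
  - apply (r_seq_mul_gap_ge p n y M); [exact Hpn | lra | lra | exact Hv |].
    pose proof (le_INR N4 n ltac:(lia)). lra.
Qed.
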